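(* Let $H\neq\{1\}$ be a reduced atomic unit-cancellative finitely presented monoid, say $H=\langle \mathcal A(H)\mid x_1=y_1,\ldots,x_m=y_m\rangle$ with $(x_i,y_i)\in\sim_H$ for all $i$, and let $\mathsf d:\sim_H\to\mathbb N_0$ be a distance on $H$. Then \[\sup\Delta(H)\le \mathsf c_{\mathsf d}(H)\le \max\{\mathsf d(x_1,y_1),\ldots,\mathsf d(x_m,y_m)\}<\infty .\] Moreover, if $\mathsf c_{\mathsf d}(\pi(x_i))\ge \mathsf d(x_i,y_i)$ for every $i\in[1,m]$, then $\mathsf c_{\mathsf d}(H)=\max\{\mathsf d(x_1,y_1),\ldots,\mathsf d(x_m,y_m)\}$.
   Context: A monoid is an associative semigroup with identity; $H^\times$ is its unit group; $H$ is reduced if $H^\times=\{1\}$. $H$ is unit-cancellative if $a=au$ or $a=ua$ (with $a,u\in H$) implies $u\in H^\times$. Atoms and atomic are as usual ($\mathcal A(H)$ = set of atoms; atomic = every non-unit is a finite product of atoms). For reduced atomic $H$, the factorization monoid $\mathsf Z(H)$ is the free monoid on $\mathcal A(H)$ if $H$ is non-commutative and the free abelian monoid on $\mathcal A(H)$ if $H$ is commutative; $\pi:\mathsf Z(H)\to H$ is the canonical epimorphism and $|z|$ is the length of $z$. $\sim_H=\{(x,y)\in\mathsf Z(H)^2\mid\pi(x)=\pi(y)\}$. $H$ is finitely presented if $\mathcal A(H)$ is finite and there is a finite set $R=\{(x_1,y_1),\dots,(x_m,y_m)\}\subset\sim_H$ generating $\sim_H$ as a congruence (i.e. $\sim_H$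 is the transitive closure of the relation $x\sim y$ iff $x=sut$, $y=svt$ with $s,t\in\mathsf Z(H)$ and $(u,v)\in R\cup R^{-1}$ or $u=v$). A distance is a map $\mathsf d:\sim_H\to\mathbb N_0$ such that for all $(z,z'),(z,z''),(z'',z')\in\sim_H$: $\mathsf d(z,z)=0$; $\mathsf d(z,z')=\mathsf d(z',z)$; $\mathsf d(z,z')\le\mathsf d(z,z'')+\mathsf d(z'',z')$; $\mathsf d(xz,xz')=\mathsf d(zy,z'y)=\mathsf d(z,z')$ for all $x,y\in\mathsf Z(H)$; and $||z|-|z'||\le\mathsf d(z,z')\le\max\{|z|,|z'|,1\}$. For $a\in H$, the catenary degree $\mathsf c_{\mathsf d}(a)$ is the least $N\in\mathbb N_0\cup\{\infty\}$ such that any two factorizations $z,z'\in\pi^{-1}(a)$ can be joined by a chain $z=z_0,\dots,z_n=z'$ in $\pi^{-1}(a)$ with $\mathsf d(z_{i-1},z_i)\le N$; $\mathsf c_{\mathsf d}(H)=\sup_{a\in H}\mathsf c_{\mathsf d}(a)$. Sets of lengths: $\mathsf L(a)=\{|z|: z\in\pi^{-1}(a)\}$. For $L\subset\mathbb Z$, $d\in\mathbb N$ is a distance of $L$ if there is $x\in L$ with $[x,x+d]\cap L=\{x,x+d\}$; $\Delta(L)$ is the set of distances of $L$ and $\Delta(H)=\bigcup_{a\in H}\Delta(\mathsf L(a))$, with $\sup\emptyset=0$. *)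

From Stdlib Require Import Arith List Permutation Relations.
Import ListNotations.

Record Monoid := {
  car :> Type;
  mul : car -> car -> car;
  one : car;
  mulA : forall a b c, mul a (mul b c) = mul (mul a b) c;
  mul1l : forall a, mul one a = a;
  mulr1 : forall a, mul a one = a }.

Section Defs.
Variable H : Monoid.

Definition is_unit (u : H) : Prop :=
  exists v, mul H u v = one H /\ mul H v u = one H.
Definition reduced : Prop := forall u : H, is_unit u -> u = one H.
Definition unit_cancellative : Prop :=
  forall a u : H, (a = mul H a u \/ a = mul H u a) -> is_unit u.
Definition atom (a : H) : Prop :=
  ~ is_unit a /\ forall b c, a = mul H b c -> is_unit b \/ is_unit c.
Definition commutative : Prop := forall a b : H, mul H a b = mul H b a.

Definition pi (z : list H) : H := fold_right (mul H) (one H) z.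
Definition is_fact (z : list H) : Prop := Forall atom z.
Definition atomic : Prop :=
  forall a : H, ~ is_unit a -> exists z, z <> [] /\ is_fact z /\ pi z = a.
Definition finitely_many_atoms : Prop :=
  exists l : list H, forall a, atom a <-> In a l.

(* equality in Z(H): free monoid (words) if H is non-commutative,
   free abelian monoid (words up to permutation) if H is commutative *)
Definition zeq (z w : list H) : Prop :=
  is_fact z /\ is_fact w /\ (z = w \/ (commutative /\ Permutation z w)).

Definition simH (z w : list H) : Prop := is_fact z /\ is_fact w /\ pi z = pi w.

(* one elementary step of the congruence generated by R *)
Definition cstep (R : list (list H * list H)) (x y : list H) : Prop :=
  exists s t u v, is_fact s /\ is_fact t /\ is_fact u /\
    (In (u, v) R \/ In (v, u) R \/ u = v) /\
    zeq x (s ++ u ++ t) /\ zeq y (s ++ v ++ t).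

Definition presents (R : list (list H * list H)) : Prop :=
  (forall p, In p R -> simH (fst p) (snd p)) /\
  (forall x y, simH x y <-> clos_trans _ (cstep R) x y).

Definition distance (d : list H -> list H -> nat) : Prop :=
  (* well defined on Z(H) (relevant only in the commutative case) *)
  (forall z z' w w', simH z z' -> zeq z w -> zeq z' w' -> d z z' = d w w') /\
  (forall z, is_fact z -> d z z = 0) /\
  (forall z z', simH z z' -> d z z' = d z' z) /\
  (forall z z' z'', simH z z' -> simH z z'' -> d z z' <= d z z'' + d z'' z') /\
  (forall x y z z', is_fact x -> is_fact y -> simH z z' ->
      d (x ++ z) (x ++ z') = d z z' /\ d (z ++ y) (z' ++ y) = d z z') /\
  (forall z z', simH z z' ->
      length z - length z' <= d z z' /\ length z' - length z <= d z z' /\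
      d z z' <= Nat.max (Nat.max (length z) (length z')) 1).

Definition cat_step (d : list H -> list H -> nat) (a : H) (N : nat)
  (u v : list H) : Prop :=
  is_fact u /\ is_fact v /\ pi u = a /\ pi v = a /\ d u v <= N.

Definition chain_bound d (a : H) (N : nat) : Prop :=
  forall z z', is_fact z -> is_fact z' -> pi z = a -> pi z' = a ->
    clos_refl_trans_1n _ (cat_step d a N) z z'.

Definition catdeg_elem d (a : H) (n : nat) : Prop :=
  chain_bound d a n /\ forall m, chain_bound d a m -> n <= m.

Definition catdeg d (n : nat) : Prop :=
  (forall a : H, exists na, catdeg_elem d a na /\ na <= n) /\
  (forall m, (forall a na, catdeg_elem d a na -> na <= m) -> n <= m).

Definition lengths (a : H) (k : nat) : Prop :=
  exists z, is_fact z /\ pi z = a /\ length z = k.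

Definition in_Delta_L (a : H) (k : nat) : Prop :=
  0 < k /\ exists x, lengths a x /\ lengths a (x + k) /\
    forall y, x < y < x + k -> ~ lengths a y.

Definition in_Delta (k : nat) : Prop := exists a : H, in_Delta_L a k.

End Defs.

Definition maxR (H : Monoid) (d : list H -> list H -> nat)
  (R : list (list H * list H)) : nat :=
  fold_right Nat.max 0 (map (fun p => d (fst p) (snd p)) R).

From Stdlib Require Import Arith List Permutation Relations.
From Stdlib Require Import Lia Classical Wf_nat.
Import ListNotations.

(* A finite presentation bounds the catenary degree: two factorizations of [a]
   are linked by a chain of elementary steps [s u t ~> s v t] with [(u, v)] a
   relation, and by invariance of [d] under translation each step has distance
   [d u v <= maxR d R]. Along such a chain the length can jump by at most the
   step distance, so a gap in [L(a)] is bounded by any chain bound for [a]. If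
   moreover each [pi x_i] needs distance [d(x_i, y_i)], then [c_d(H)] is at
   least every [d(x_i, y_i)], hence equal to the maximum. *)

Lemma least_nat (P : nat -> Prop) (n : nat) :
  P n -> exists m, P m /\ forall k, P k -> m <= k.
Proof.
  intros Pn.
  destruct (dec_inh_nat_subset_has_unique_least_element P (fun k => classic (P k)))
    as [m [Hm _]]; [now exists n|].
  now exists m.
Qed.

Section Factorizations.
Variable H : Monoid.

Lemma pi_app (x y : list H) : pi H (x ++ y) = mul H (pi H x) (pi H y).
Proof.
  induction x as [|a x IH]; simpl; [now rewrite mul1l|now rewrite IH, mulA].
Qed.

Lemma pi_perm (z w : list H) : commutative H -> Permutation z w -> pi H z = pi H w.
Proof.
  intros Hc P; induction P; simpl; try congruence.
  now rewrite !mulA, (Hc x y).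
Qed.

Lemma zeq_pi (z w : list H) : zeq H z w -> pi H z = pi H w.
Proof. intros (_ & _ & [->|[Hc P]]); [reflexivity|now apply pi_perm]. Qed.

Lemma zeq_sym (z w : list H) : zeq H z w -> zeq H w z.
Proof.
  intros (Fz & Fw & [->|[Hc P]]); repeat split; auto.
  right; split; [exact Hc|now apply Permutation_sym].
Qed.

Lemma simH_sym (z w : list H) : simH H z w -> simH H w z.
Proof. intros (Fz & Fw & E); repeat split; auto. Qed.

Lemma simH_app (s t u v : list H) : is_fact H s -> is_fact H t ->
  simH H u v -> simH H (s ++ u ++ t) (s ++ v ++ t).
Proof.
  intros Fs Ft (Fu & Fv & E).
  split; [|split]; try (apply Forall_app; split; [|apply Forall_app; split]; assumption).
  now rewrite !pi_app, E.
Qed.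

Lemma maxR_ge (d : list H -> list H -> nat) (R : list (list H * list H)) p :
  In p R -> d (fst p) (snd p) <= maxR H d R.
Proof.
  unfold maxR; induction R as [|q R IH]; simpl; [tauto|].
  intros [->|Hin]; [lia|specialize (IH Hin); lia].
Qed.

Lemma maxR_lub (d : list H -> list H -> nat) (R : list (list H * list H)) c :
  (forall p, In p R -> d (fst p) (snd p) <= c) -> maxR H d R <= c.
Proof.
  unfold maxR; induction R as [|q R IH]; simpl; intros Hp; [lia|].
  apply Nat.max_lub; auto.
Qed.

End Factorizations.

Section CatenaryDegree.
Variables (H : Monoid) (d : list H -> list H -> nat).

Lemma catdeg_elem_exists (a : H) (N : nat) :
  chain_bound H d a N -> exists n, catdeg_elem H d a n /\ n <= N.
Proof.
  intros CN.
  destruct (least_nat (chain_bound H d a) N CN) as [n [Cn Ln]].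
  exists n; split; [split|]; auto.
Qed.

Lemma catdeg_elem_unique (a : H) (n n' : nat) :
  catdeg_elem H d a n -> catdeg_elem H d a n' -> n = n'.
Proof. intros [C L] [C' L']; apply Nat.le_antisymm; auto. Qed.

Lemma catdeg_exists (N : nat) : (forall a, chain_bound H d a N) ->
  exists c, catdeg H d c /\ c <= N.
Proof.
  intros CN.
  assert (bounded : forall a n, catdeg_elem H d a n -> n <= N)
    by (intros a n [_ L]; exact (L N (CN a))).
  destruct (least_nat (fun m => forall a n, catdeg_elem H d a n -> n <= m) N bounded)
    as [c [Bc Lc]].
  exists c; split; [split|apply Lc, bounded]; [|exact Lc].
  intro a; destruct (catdeg_elem_exists a N (CN a)) as [n [En _]].
  exists n; split; [exact En|exact (Bc a n En)].
Qed.

Lemma catdeg_elem_le (c : nat) (a : H) (n : nat) :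
  catdeg H d c -> catdeg_elem H d a n -> n <= c.
Proof.
  intros [Ec _] En; destruct (Ec a) as [n' [En' Le]].
  now rewrite (catdeg_elem_unique a n n' En En').
Qed.

Hypothesis Hd : distance H d.

(* A chain that starts at or below length [x] and ends at or above [x + k],
   avoiding all lengths strictly in between, must contain a step jumping over
   the gap; that step has distance at least its length difference. *)
Lemma chain_crosses_gap (a : H) (N k x : nat) :
  (forall y, x < y < x + k -> ~ lengths H a y) ->
  forall z z', clos_refl_trans_1n _ (cat_step H d a N) z z' ->
  length z <= x -> x + k <= length z' -> k <= N.
Proof.
  intros Gap z z' C; induction C as [z|z y z' [Fz [Fy [Pz [Py Dzy]]]] C IH];
    intros Lz Lz'; [lia|].
  destruct (le_lt_dec (x + k) (length y)) as [Ly|Ly].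
  - destruct Hd as (_ & _ & _ & _ & _ & Dlen).
    assert (S : simH H z y) by (repeat split; auto; congruence).
    destruct (Dlen z y S) as (_ & Djump & _); lia.
  - destruct (le_lt_dec (length y) x) as [Ly'|Ly']; [exact (IH Ly' Lz')|].
    exfalso; apply (Gap (length y)); [lia|now exists y].
Qed.

Lemma Delta_le_chain_bound (a : H) (N k : nat) :
  chain_bound H d a N -> in_Delta_L H a k -> k <= N.
Proof.
  intros CN [_ [x [[z [Fz [Pz Lz]]] [[z' [Fz' [Pz' Lz']]] Gap]]]].
  apply (chain_crosses_gap a N k x Gap z z'); [apply CN| |]; auto; lia.
Qed.

Lemma Delta_le_catdeg (c k : nat) : catdeg H d c -> in_Delta H k -> k <= c.
Proof.
  intros Cc [a Ka]; destruct (proj1 Cc a) as [n [[Cn _] Le]].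
  eapply Nat.le_trans; [exact (Delta_le_chain_bound a n k Cn Ka)|exact Le].
Qed.

Variable R : list (list H * list H).
Hypothesis HR : presents H R.

Lemma cstep_dist_le (x y : list H) :
  cstep H R x y -> simH H x y /\ d x y <= maxR H d R.
Proof.
  destruct HR as [Rsim _]; destruct Hd as (Dwd & D0 & Dsym & _ & Dtr & _).
  intros (s & t & u & v & Fs & Ft & Fu & Huv & Zx & Zy).
  assert (Suv : simH H u v /\ d u v <= maxR H d R).
  { destruct Huv as [Hin|[Hin|<-]].
    - exact (conj (Rsim _ Hin) (maxR_ge H d R _ Hin)).
    - pose proof (Rsim _ Hin) as S; split; [now apply simH_sym|].
      rewrite Dsym by now apply simH_sym.
      exact (maxR_ge H d R _ Hin).
    - split; [repeat split; auto|rewrite D0; [lia|exact Fu]]. }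
  destruct Suv as [Suv Duv].
  assert (Sx : simH H (s ++ u ++ t) (s ++ v ++ t)) by now apply simH_app.
  pose proof Zx as [Fx _]; pose proof Zy as [Fy _]; split.
  - repeat split; auto.
    rewrite (zeq_pi H _ _ Zx), (zeq_pi H _ _ Zy); apply Sx.
  - rewrite <- (Dwd _ _ _ _ Sx (zeq_sym H _ _ Zx) (zeq_sym H _ _ Zy)).
    assert (Sut : simH H (u ++ t) (v ++ t))
      by (apply (simH_app H [] t); auto; constructor).
    rewrite (proj1 (Dtr s [] _ _ Fs (Forall_nil _) Sut)).
    now rewrite (proj2 (Dtr [] t _ _ (Forall_nil _) Ft Suv)).
Qed.

Lemma chain_bound_maxR (a : H) : chain_bound H d a (maxR H d R).
Proof.
  intros z z' Fz Fz' Pz Pz'; apply clos_rt_rt1n.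
  assert (C : clos_trans _ (cstep H R) z z')
    by (apply (proj2 HR); repeat split; auto; congruence).
  clear Fz Fz' Pz'; revert Pz.
  induction C as [x y S|x y w C1 IH1 _ IH2]; intros Px.
  - destruct (cstep_dist_le x y S) as [[Fx [Fy Pxy]] Dxy].
    apply rt_step; repeat split; auto; congruence.
  - assert (Py : pi H y = a)
      by (rewrite <- Px; symmetry; apply (proj2 HR), C1).
    eapply rt_trans; [exact (IH1 Px)|exact (IH2 Py)].
Qed.

End CatenaryDegree.

Theorem proposition3p4 (H : Monoid) (R : list (list H * list H))
  (d : list H -> list H -> nat) :
  (exists a : H, a <> one H) ->
  reduced H -> atomic H -> unit_cancellative H ->
  finitely_many_atoms H -> presents H R ->
  distance H d ->
  (exists c, catdeg H d c /\ (forall k, in_Delta H k -> k <= c) /\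
             c <= maxR H d R) /\
  ((forall p, In p R -> forall n, catdeg_elem H d (pi H (fst p)) n ->
        d (fst p) (snd p) <= n) ->
   catdeg H d (maxR H d R)).
Proof.
  intros _ _ _ _ _ HR Hd.
  pose proof (chain_bound_maxR H d Hd R HR) as Cmax.
  destruct (catdeg_exists H d (maxR H d R) Cmax) as [c [Cc cM]].
  split.
  - exists c; repeat split; try exact cM; try apply Cc.
    intro k; exact (Delta_le_catdeg H d Hd c k Cc).
  - intros Hneed.
    enough (Mc : maxR H d R <= c) by (replace (maxR H d R) with c by lia; exact Cc).
    apply maxR_lub; intros p Hp.
    destruct (catdeg_elem_exists H d (pi H (fst p)) _ (Cmax _)) as [n [En _]].
    exact (Nat.le_trans _ _ _ (Hneed p Hp n En) (catdeg_elem_le H d c _ n Cc En)).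
Qed.
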